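(* Let $n\in\mathbb{N}$, $N=\{1,\dots,n\}$, and let $(\mathbf v,d)=(v_1,\dots,v_n,d)\in\mathbb{N}^{n+1}$ with $v_i<d$ for all $i$. Write $\frac{v_i}{d}=\frac{s_i}{t_i}$ with $s_i,t_i\in\mathbb{N}$, $\gcd(s_i,t_i)=1$, put $w_i=v_i/d$, $d_{\mathbf w}=\operatorname{lcm}(t_j\mid j\in N)$, and for $k\in\mathbb{N}$ put $M(k)=\{j\in N\mid t_j\mid k\}$ and $\mu(k)=\prod_{j\in M(k)}\left(\frac1{w_j}-1\right)=\prod_{j\in M(k)}\frac{d-v_j}{v_j}$ (empty product $=1$). Let $D_{\mathbf w}=\prod_{j=1}^n\left(\frac1{s_j}\Lambda_{t_j}-\Lambda_1\right)\in\mathbb{Q}\langle S^{UR}\rangle$ and let $L(k)$, $k\in\mathbb{N}$, be its Lefschetz numbers. Let $\rho_{(\mathbf v,d)}(t)=t^{v_1+\dots+v_n}\prod_{j=1}^n\frac{t^{d-v_j}-1}{t^{v_j}-1}\in\mathbb{Q}(t)$. Then: (a) For all $k\in\mathbb{N}$: $M(k)=M(\gcd(k,d_{\mathbf w}))=\{j\in N\mid \frac{d}{\gcd(k,d_{\mathbf w})}\text{ divides } v_j\}$ and $\mu(k)=\mu(\gcd(k,d_{\mathbf w}))$. (b) For all $k\in\mathbb{N}$: $L(k)=L(\gcd(k,d_{\mathbf w}))=(-1)^{n-|M(k)|}\mu(k)\in\mathbb{Q}^*$. (c) If $(\mathbf v,d)$ satisfies condition $\overline{(C2)}$, then $\mu(k)\in\mathbb{N}$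 for all $k\in\mathbb{N}$. Moreover, $(\mathbf v,d)$ satisfies $\overline{(C2)}$ if and only if $\rho_{(\mathbf v,d)}\in\mathbb{Z}[t]$.
   Context: $S^{UR}\subset S^1$ is the set of all roots of unity; $\mathbb{Q}\langle S^{UR}\rangle$ is the group ring over $\mathbb{Q}$ of the multiplicative group $S^{UR}$, with elements $\sum_j b_j\langle\zeta_j\rangle$ ($b_j\in\mathbb{Q}$, $\zeta_j\in S^{UR}$) and product $\langle\zeta_1\rangle\langle\zeta_2\rangle=\langle\zeta_1\zeta_2\rangle$. For $m\in\mathbb{N}$, $\Lambda_m=\sum_{a=0}^{m-1}\langle e^{2\pi i a/m}\rangle$ (so $\Lambda_1=\langle1\rangle$ is the unit). The Lefschetz numbers of an element $\sum_j b_j\langle\zeta_j\rangle$ are $L(k)=\sum_j b_j\zeta_j^k\in\mathbb{C}$ for $k\in\mathbb{N}$. For $J\subset N$ and $c\in\mathbb{Z}$ let $(\mathbb{Z}^J)_c=\{\alpha\in\mathbb{Z}^n\mid \alpha_i=0\text{ for } i\notin J,\ \sum_i\alpha_iv_i=c\}$. Condition $\overline{(C2)}$: for every nonempty $J\subset N$ there exists $K\subset N$ with $|K|=|J|$ such that $(\mathbb{Z}^J)_{d-v_k}\neq\emptyset$ for all $k\in K$ (equivalently, $\gcd(v_j\mid j\in J)$ divides $d-v_k$ for all $k\in K$). *)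

From HB Require Import structures.
From mathcomp Require Import all_boot all_order all_algebra all_field.
Set Implicit Arguments. Unset Strict Implicit. Unset Printing Implicit Defensive.
Import Order.TTheory GRing.Theory Num.Theory.
Local Open Scope ring_scope.

(* e^{2 pi i / m}: n.-root z has minimal non-negative argument, so
   m.-root (-1) = e^{i pi / m} and its square is e^{2 pi i / m}. *)
Definition zeta (m : nat) : algC := (m.-root (-1)) ^+ 2.

(* Elements of the group ring Q<S^UR>, represented as formal sums
   sum_j b_j <zeta_j>, i.e. lists of pairs (b_j, zeta_j). *)
Definition grelt := seq (rat * algC).

Definition gr_one : grelt := [:: (1, 1)].
Definition gr_add (x y : grelt) : grelt := x ++ y.
Definition gr_scale (c : rat) (x : grelt) : grelt := [seq (c * p.1, p.2) | p <- x].
Definition gr_opp (x : grelt) : grelt := gr_scale (-1) x.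
Definition gr_mul (x y : grelt) : grelt :=
  [seq (p.1 * q.1, p.2 * q.2) | p <- x, q <- y].

Definition Lambda (m : nat) : grelt := [seq (1, zeta m ^+ a) | a <- iota 0 m].

Definition lefschetz (x : grelt) (k : nat) : algC :=
  \sum_(p <- x) ratr p.1 * p.2 ^+ k.

Section Data.
Variables (n : nat) (v : 'I_n -> nat) (d : nat).

Definition w (i : 'I_n) : rat := (v i)%:R / d%:R.
Definition s (i : 'I_n) : nat := `|numq (w i)|%N.
Definition t (i : 'I_n) : nat := `|denq (w i)|%N.

Definition d_w : nat := \big[lcmn/1%N]_(j < n) t j.

Definition M (k : nat) : {set 'I_n} := [set j : 'I_n | (t j %| k)%N].

Definition mu (k : nat) : rat := \prod_(j in M k) ((w j)^-1 - 1).

Definition D_w : grelt :=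
  \big[gr_mul/gr_one]_(j < n)
     gr_add (gr_scale (s j)%:R^-1 (Lambda (t j))) (gr_opp (Lambda 1)).

Definition L (k : nat) : algC := lefschetz D_w k.

Definition ZJ_nonempty (J : {set 'I_n}) (c : int) : Prop :=
  exists alpha : 'I_n -> int,
    (forall i, i \notin J -> alpha i = 0) /\ \sum_(i < n) alpha i * (v i)%:Z = c.

Definition C2bar : Prop :=
  forall J : {set 'I_n}, J != set0 ->
    exists K : {set 'I_n}, #|K| = #|J| /\
      forall k, k \in K -> ZJ_nonempty J (d%:Z - (v k)%:Z).

Definition rho : {fraction {poly rat}} :=
  FracField.tofrac ('X ^+ (\sum_(j < n) v j) * \prod_(j < n) ('X ^+ (d - v j) - 1))
  / FracField.tofrac (\prod_(j < n) ('X ^+ (v j) - 1 : {poly rat})).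

End Data.

(* Lefschetz numbers are multiplicative, and Lambda_m has Lefschetz number m
   or 0 according as m divides k or not, because zeta m is a primitive m-th
   root of unity; as t_j / s_j = 1 / w_j this gives (b), and (a) reduces to
   t_j | d together with t_j | g <-> d / g | v_j for g | d.
   For (c), X^a - 1 is the product of the cyclotomic polynomials Phi_m, m | a,
   so prod_j (X^(d - v_j) - 1) is a multiple of prod_j (X^(v_j) - 1) in Z[X]
   iff every m divides at least as many of the d - v_j as of the v_j.  By
   Bezout this counting condition is C2bar: compare J = {j | m | v_j} with
   m = gcd(v_j, j in J).  Applied to the subfamily M(gcd(k, d_w)), the same
   polynomial divisibility, after removing the factors X - 1 and evaluating at
   1, gives prod v_j | prod (d - v_j), i.e. mu(k) is an integer. *)

From HB Require Import structures.
From mathcomp Require Import all_boot all_order all_algebra all_field.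
From mathcomp Require Import ring zify.
Set Implicit Arguments. Unset Strict Implicit. Unset Printing Implicit Defensive.
Import Order.TTheory GRing.Theory Num.Theory.
Local Open Scope ring_scope.

Lemma sum_expr_prim_root (R : idomainType) (g : R) q j : q.-primitive_root g ->
  \sum_(k < q) (g ^+ j) ^+ k = if (q %| j)%N then q%:R else 0.
Proof.
move=> g_prim; rewrite (prim_order_dvd g_prim).
have [->|gj_neq1] := eqVneq (g ^+ j) 1.
  by rewrite (eq_bigr (fun _ => 1)) ?sumr_const ?card_ord // => k _; rewrite expr1n.
have /eqP : (g ^+ j) ^+ q - 1 = 0 by rewrite exprAC (prim_expr_order g_prim) expr1n subrr.
by rewrite subrX1 mulf_eq0 subr_eq0 (negbTE gj_neq1) => /eqP.
Qed.

Lemma normC_sub1_sqr (x : algC) : `|x| = 1 -> `|x - 1| ^+ 2 = 2 - 2 * 'Re x.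
Proof.
move=> x_norm1; have xx : x * x^* = 1 by rewrite -normCK x_norm1 expr1n.
rewrite normCK rmorphB rmorph1 ReE [2 * _]mulrC divfK ?pnatr_eq0 //.
by rewrite mulrBl !mulrBr xx; ring.
Qed.

(* Averaging argument: the numbers (u - 1) / (z - 1), for z ranging over the
   q-th roots of u, sum to q; they all have norm at most 1 if no z has a
   larger real part than u, which forces z = u for every such z. *)
Lemma exists_rootC_Re_gt (u : algC) q : `|u| = 1 -> u != 1 -> (1 < q)%N ->
  exists2 x, x ^+ q = u & 'Re u < 'Re x.
Proof.
move=> u_norm1 u_neq1 q_gt1; have q_gt0 := ltnW q_gt1.
have [g g_prim] := C_prim_root_exists q_gt0.
pose z (k : 'I_q) := q.-root u * g ^+ k.
have zq k : z k ^+ q = u.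
  by rewrite exprMn exprAC (prim_expr_order g_prim) expr1n mulr1 rootCK.
have [/existsP[k Re_gt]|/existsPn Re_le] := boolP [exists k, 'Re u < 'Re (z k)].
  by exists (z k).
have {}Re_le k : 'Re (z k) <= 'Re u by rewrite real_leNgt ?Creal_Re ?Re_le.
have z_norm1 k : `|z k| = 1.
  by apply/eqP; rewrite -(pexpr_eq1 q_gt0) // -normrX zq u_norm1.
have z_sub1_neq0 k : z k - 1 != 0.
  by rewrite subr_eq0; apply: contra u_neq1 => /eqP zk1; rewrite -(zq k) zk1 expr1n.
pose r k := (u - 1) / (z k - 1).
have r_geom k : r k = \sum_(j < q) z k ^+ j.
  by apply: (mulIf (z_sub1_neq0 k)); rewrite divfK // -(zq k) subrX1 mulrC.
have sum_r : \sum_k r k = \sum_(k < q) 1.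
  rewrite (eq_bigr _ (fun k _ => r_geom k)) exchange_big /=.
  rewrite (bigD1 (Ordinal q_gt0)) //= [X in _ + X]big1 => [|j j_neq0].
    by rewrite addr0; apply: eq_bigr => k _; rewrite expr0.
  under eq_bigr do rewrite exprMn exprAC.
  rewrite -mulr_sumr sum_expr_prim_root // gtnNdvd ?mulr0 ?ltn_ord // lt0n.
  by apply: contraNneq j_neq0 => j0; apply/eqP/val_inj.
have r_norm k : `|r k| <= 1.
  rewrite normf_div ler_pdivrMr ?normr_gt0 // mul1r.
  rewrite -(ler_pXn2r (isT : (0 < 2)%N)) ?nnegrE ?normr_ge0 //.
  by rewrite !normC_sub1_sqr // lerD2l lerN2 ler_wpM2l.
have r1 := normC_sum_upper (fun k _ => r_norm k) sum_r.
have z_eq_u k : z k = u.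
  have /(canRL (divfK (z_sub1_neq0 k))) := r1 k isT.
  by rewrite mul1r => /addIr ->.
have root_neq0 : q.-root u != 0.
  by rewrite rootC_eq0 // -normr_eq0 u_norm1 oner_eq0.
have := z_eq_u (Ordinal q_gt1); rewrite -(z_eq_u (Ordinal q_gt0)) /z /=.
move/(mulfI root_neq0); rewrite expr0 => /eqP; rewrite -(prim_order_dvd g_prim) dvdn1.
by rewrite gtn_eqF.
Qed.

Lemma Re_le_rootC_real n (x y : algC) : (0 < n)%N -> x \is Num.real ->
  y ^+ n = x -> 'Re y <= 'Re (n.-root x).
Proof.
move=> n_gt0 x_real yn_x; have [Im_ge0|Im_lt0] := boolP (0 <= 'Im y).
  exact: rootC_Re_max.
rewrite -Re_conj; apply: rootC_Re_max => //.
  by rewrite -rmorphXn /= yn_x conj_Creal.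
by rewrite Im_conj oppr_ge0 ltW // real_ltNge ?Creal_Im.
Qed.

(* n.-root (-1) is the n-th root of -1 of largest real part (among those with
   nonnegative imaginary part).  If zeta m had order k < m, then y := m.-root (-1)
   would satisfy y ^+ k = -1, and a suitable (m %/ k)-th root of y would be an
   m-th root of -1 with larger real part. *)
Lemma zeta_prim m : (0 < m)%N -> m.-primitive_root (zeta m).
Proof.
move=> m_gt0; pose y := m.-root (-1 : algC).
have ym : y ^+ m = -1 by rewrite rootCK.
have zeta_m : zeta m ^+ m = 1 by rewrite /zeta exprAC ym sqrrN expr1n.
have [k k_prim k_dvd_m] := prim_order_exists m_gt0 zeta_m.
have k_gt0 := prim_order_gt0 k_prim.
have [q def_m] := dvdnP k_dvd_m.
have [q_le1|q_gt1] := leqP q 1.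
  have : (0 < q * k)%N by rewrite -def_m.
  rewrite muln_gt0 => /andP[q_gt0 _]; have q1 : q = 1%N by lia.
  by move: k_prim; rewrite [k](_ : _ = m) // def_m q1 mul1n.
have yk : y ^+ k = -1.
  have /eqP : (y ^+ k) ^+ 2 = 1 by rewrite exprAC (prim_expr_order k_prim).
  rewrite sqrf_eq1 => /orP[/eqP yk1|/eqP //]; move: ym.
  by rewrite def_m mulnC exprM yk1 expr1n => /eqP; rewrite eq_sym eqNr oner_eq0.
have y_norm1 : `|y| = 1.
  by apply/eqP; rewrite -(pexpr_eq1 m_gt0) // -normrX ym normrN normr1.
have y_neq1 : y != 1.
  by apply: contraPneq yk => ->; rewrite expr1n => /eqP; rewrite eq_sym eqNr oner_eq0.
have [x xq Re_lt] := exists_rootC_Re_gt y_norm1 y_neq1 q_gt1.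
have xm : x ^+ m = -1 by rewrite def_m exprM xq yk.
by move: Re_lt; rewrite real_ltNge ?Creal_Re // Re_le_rootC_real ?rpredN1.
Qed.

Lemma lefschetz_add x y k : lefschetz (gr_add x y) k = lefschetz x k + lefschetz y k.
Proof. exact: big_cat. Qed.

Lemma lefschetz_scale c x k : lefschetz (gr_scale c x) k = ratr c * lefschetz x k.
Proof.
rewrite /lefschetz big_map mulr_sumr; apply: eq_bigr => p _ /=.
by rewrite rmorphM mulrA.
Qed.

Lemma lefschetz_mul x y k : lefschetz (gr_mul x y) k = lefschetz x k * lefschetz y k.
Proof.
rewrite /lefschetz big_allpairs_dep mulr_suml; apply: eq_bigr => p _.
by rewrite mulr_sumr; apply: eq_bigr => q _ /=; rewrite rmorphM exprMn; ring.
Qed.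

Lemma lefschetz_one k : lefschetz gr_one k = 1.
Proof. by rewrite /lefschetz big_seq1 /= rmorph1 expr1n mulr1. Qed.

Lemma lefschetz_Lambda m k : (0 < m)%N ->
  lefschetz (Lambda m) k = if (m %| k)%N then m%:R else 0.
Proof.
move=> m_gt0; rewrite /lefschetz /Lambda big_map -val_enum_ord big_map.
rewrite -(sum_expr_prim_root k (zeta_prim m_gt0)) big_enum /=.
by apply: eq_bigr => a _; rewrite rmorph1 mul1r exprAC.
Qed.

Lemma Xn_sub1_prod_Cyclotomic a B : (0 < a)%N -> (a < B)%N ->
  'X^a - 1 = \prod_(m < B) 'Phi_m ^+ (m %| a)%N.
Proof.
move=> a_gt0 a_lt_B; rewrite -(prod_Cyclotomic a_gt0).
rewrite (bigID (fun m : 'I_B => (m %| a)%N)) /= [X in _ = _ * X]big1 => [|m /negbTE->]//.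
rewrite mulr1 (eq_bigr (fun m : 'I_B => 'Phi_m)) => [|m ->]//.
rewrite -(big_mkord (fun m => (m %| a)%N)) -[RHS]big_filter.
apply: perm_big; apply: uniq_perm.
- exact: divisors_uniq.
- by rewrite filter_uniq // iota_uniq.
move=> m; rewrite mem_filter mem_index_iota -dvdn_divisors //.
by case: (boolP (m %| a)%N) => //= /(dvdn_leq a_gt0)/leq_ltn_trans->.
Qed.

Definition count_dvd (I : finType) (P : pred I) (f : I -> nat) (m : nat) : nat :=
  #|[set i | P i & (m %| f i)%N]|.

Definition count_dvd_le (I : finType) (P : pred I) (a b : I -> nat) : Prop :=
  forall m, (0 < m)%N -> (count_dvd P a m <= count_dvd P b m)%N.

Lemma count_dvd_eq0 (I : finType) (P : pred I) (f : I -> nat) m :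
  (forall i, ~~ (m %| f i)%N) -> count_dvd P f m = 0%N.
Proof. by move=> ndvd; apply: eq_card0 => i; rewrite !inE (negbTE (ndvd i)) andbF. Qed.

Lemma prod_Xn_sub1_Cyclotomic (I : finType) (P : pred I) (f : I -> nat) B :
  (forall i, 0 < f i)%N -> (forall i, f i < B)%N ->
  \prod_(i | P i) ('X^(f i) - 1) = \prod_(m < B) 'Phi_m ^+ count_dvd P f m.
Proof.
move=> f_gt0 f_lt_B.
rewrite (eq_bigr _ (fun i _ => Xn_sub1_prod_Cyclotomic (f_gt0 i) (f_lt_B i))).
rewrite exchange_big /=; apply: eq_bigr => m _; rewrite prodrXr /count_dvd -sum1dep_card.
by rewrite big_mkcondr; congr (_ ^+ _); apply: eq_bigr => i _; case: (m %| f i)%N.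
Qed.

Lemma Cyclotomic_prim_root_neq0 (z : algC) m i : m.-primitive_root z -> i != m ->
  (map_poly intr 'Phi_i : {poly algC}).[z] != 0.
Proof.
move=> z_prim i_neq_m; have [->|i_gt0] := posnP i.
  by rewrite Cyclotomic0 rmorph1 hornerC oner_neq0.
have [y y_prim] := C_prim_root_exists i_gt0.
rewrite (Cintr_Cyclotomic y_prim) -rootE root_cyclotomic //.
apply: contra i_neq_m => z_prim_i; rewrite eqn_dvd.
rewrite (prim_order_dvd z_prim_i) (prim_order_dvd z_prim).
by rewrite (prim_expr_order z_prim) (prim_expr_order z_prim_i) eqxx.
Qed.

(* Evaluate at a primitive m-th root of unity, the only cyclotomic factor
   vanishing there being 'Phi_m. *)
Lemma prod_Cyclotomic_exp_le B m s (e f : nat -> nat) (p : {poly int}) :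
  (0 < m < B)%N ->
  'X^s * \prod_(i < B) 'Phi_i ^+ f i = p * \prod_(i < B) 'Phi_i ^+ e i ->
  (e m <= f m)%N.
Proof.
case/andP=> m_gt0 m_lt_B eq_p; rewrite leqNgt; apply/negP => f_lt_e; move: eq_p.
have [z z_prim] := C_prim_root_exists m_gt0.
pose mo := Ordinal m_lt_B; pose rest g := \prod_(i < B | i != mo) 'Phi_i ^+ g i.
have rest_neq0 g : (map_poly intr (rest g) : {poly algC}).[z] != 0.
  rewrite rmorph_prod horner_prod; apply/prodf_neq0 => i i_neq_m.
  by rewrite rmorphXn horner_exp expf_neq0 // (Cyclotomic_prim_root_neq0 z_prim).
have Phi_f_neq0 : 'Phi_m ^+ f m != 0.
  by rewrite expf_neq0 // monic_neq0 // Cyclotomic_monic.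
rewrite (bigD1 mo) //= [in RHS](bigD1 mo) //= -/(rest f) -/(rest e).
rewrite -(subnKC (ltnW f_lt_e)) exprD.
rewrite mulrCA -mulrA [p * _]mulrCA => /(mulfI Phi_f_neq0).
move/(congr1 (fun q => (map_poly (intr : int -> algC) q).[z])) => /=.
rewrite !rmorphM !rmorphXn /= map_polyX !hornerM hornerXn horner_exp.
rewrite (Cintr_Cyclotomic z_prim).
have /rootP-> : root (cyclotomic z m) z by rewrite root_cyclotomic.
rewrite expr0n subn_eq0 leqNgt f_lt_e /= mulr0n mul0r mulr0 => /eqP.
rewrite mulf_eq0 expf_eq0 (prim_root_eq0 z_prim) gtn_eqF // andbF.
by rewrite (negbTE (rest_neq0 f)).
Qed.

Lemma prod_Xn_sub1_dvdP (I : finType) (P : pred I) (a b : I -> nat) s :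
  (forall i, 0 < a i)%N -> (forall i, 0 < b i)%N ->
  (exists p : {poly int},
     'X^s * \prod_(i | P i) ('X^(b i) - 1) = p * \prod_(i | P i) ('X^(a i) - 1)) <->
  count_dvd_le P a b.
Proof.
move=> a_gt0 b_gt0; pose B := (\max_i (a i + b i)).+1.
have a_lt_B i : (a i < B)%N by rewrite ltnS (leq_trans (leq_addr _ _) (leq_bigmax i)).
have b_lt_B i : (b i < B)%N by rewrite ltnS (leq_trans (leq_addl _ _) (leq_bigmax i)).
rewrite (prod_Xn_sub1_Cyclotomic P a_gt0 a_lt_B) (prod_Xn_sub1_Cyclotomic P b_gt0 b_lt_B).
split=> [[p eq_p] m m_gt0 | count_le].
  have [m_lt_B|m_ge_B] := ltnP m B; first by apply: prod_Cyclotomic_exp_le eq_p; rewrite m_gt0.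
  by rewrite count_dvd_eq0 // => i; rewrite gtnNdvd // (leq_trans (a_lt_B i)).
exists ('X^s * \prod_(m < B) 'Phi_m ^+ (count_dvd P b m - count_dvd P a m)).
rewrite -mulrA -big_split /=; congr (_ * _); apply: eq_bigr => m _.
rewrite -exprD subnK //; have [m0|] := posnP m; last exact: count_le.
by rewrite m0 count_dvd_eq0 // => i; rewrite dvd0n -lt0n.
Qed.

(* Divide out the factors X - 1 and evaluate at 1, where (X^a - 1)/(X - 1)
   takes the value a. *)
Lemma prod_dvdn_of_Xn_sub1 (I : finType) (P : pred I) (a b : I -> nat) (p : {poly int}) :
  \prod_(i | P i) ('X^(b i) - 1) = p * \prod_(i | P i) ('X^(a i) - 1) ->
  (\prod_(i | P i) a i %| \prod_(i | P i) b i)%N.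
Proof.
pose G f : {poly int} := \sum_(j < f) 'X^j.
have XG f : 'X^f - 1 = ('X - 1) * G f by rewrite subrX1.
have G1 f : (G f).[1] = f%:R.
  rewrite horner_sum (eq_bigr (fun _ => 1)) ?sumr_const ?card_ord //.
  by move=> j _; rewrite hornerXn expr1n.
have X1_neq0 : \prod_(i | P i) ('X - 1 : {poly int}) != 0.
  by apply/prodf_neq0 => i _; rewrite -polyC1 polyXsubC_eq0.
rewrite !(eq_bigr _ (fun i _ => XG _)) !big_split /= mulrCA => /(mulfI X1_neq0).
move/(congr1 (horner^~ 1)); rewrite hornerM !horner_prod.
under eq_bigr do rewrite G1; under [X in _ * X]eq_bigr do rewrite G1.
rewrite -!natr_prod !natz => eq_1.
suff: ((\prod_(i | P i) a i)%:Z %| (\prod_(i | P i) b i)%:Z)%Z by rewrite dvdzE.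
by apply/dvdzP; exists p.[1].
Qed.

Lemma tofrac_div_intpolyP (N D : {poly int}) : D != 0 ->
  (exists p : {poly int}, FracField.tofrac (map_poly intr N : {poly rat}) /
     FracField.tofrac (map_poly intr D) = FracField.tofrac (map_poly intr p)) <->
  exists p, N = p * D.
Proof.
move=> D_neq0; have mapD_neq0 : (map_poly intr D : {poly rat}) != 0.
  by rewrite map_poly_eq0_id0 // intr_eq0 lead_coef_eq0.
have tofD_neq0 : FracField.tofrac (map_poly intr D : {poly rat}) != 0 by rewrite tofrac_eq0.
have map_inj : injective (map_poly (intr : int -> rat)).
  by apply: map_inj_poly; [exact: intr_inj | exact: rmorph0].
split=> [[p eq_p]|[p ->]]; exists p; last by rewrite rmorphM /= tofracM mulfK.
apply: map_inj; apply/eqP; rewrite -tofrac_eq rmorphM /= tofracM -eq_p divfK //.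
Qed.

Lemma biggcdn_Bezout (I : finType) (r : seq I) (f : I -> nat) :
  exists alpha : I -> int, (forall i, i \notin r -> alpha i = 0) /\
    \sum_i alpha i * (f i)%:Z = (\big[gcdn/0]_(j <- r) f j)%N%:Z.
Proof.
elim: r => [|a r [alpha [alpha0 sum_alpha]]].
  by exists (fun _ => 0); split=> //; rewrite big_nil big1 // => i _; rewrite mul0r.
have [u [u' bezout]] := Bezoutz (f a)%:Z (\big[gcdn/0]_(j <- r) f j)%N%:Z.
exists (fun i => (if i == a then u else 0) + u' * alpha i); split.
  by move=> i; rewrite inE negb_or => /andP[/negbTE-> /alpha0->]; rewrite mulr0 addr0.
rewrite big_cons (_ : Posz _ = gcdz (f a)%:Z (\big[gcdn/0]_(j <- r) f j)%N%:Z) //.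
rewrite -bezout -sum_alpha (eq_bigr _ (fun i _ => mulrDl _ _ _)) big_split /=.
congr (_ + _); last by rewrite mulr_sumr; apply: eq_bigr => i _; rewrite mulrA.
by rewrite (bigD1 a) //= eqxx big1 ?addr0 // => i /negbTE->; rewrite mul0r.
Qed.

Lemma ZJ_nonemptyP n (v : 'I_n -> nat) (J : {set 'I_n}) c :
  ZJ_nonempty v J c <-> ((\big[gcdn/0]_(j in J) v j)%N%:Z %| c)%Z.
Proof.
split=> [[alpha [alpha0 <-]]|/dvdzP[q ->]].
  apply: rpred_sum => i _; have [iJ|iJ] := boolP (i \in J).
    by apply: dvdz_mull; rewrite dvdzE /=; apply: biggcdn_inf iJ (dvdnn _).
  by rewrite alpha0 ?mul0r ?rpred0.
have [alpha [alpha0 sum_alpha]] := biggcdn_Bezout (enum J) v.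
exists (fun i => q * alpha i); split=> [i iJ|]; first by rewrite alpha0 ?mulr0 ?mem_enum.
rewrite big_enum /= in sum_alpha; rewrite -sum_alpha mulr_sumr.
by apply: eq_bigr => i _; rewrite mulrA.
Qed.

Section WeightData.
Variables (n : nat) (v : 'I_n -> nat) (d : nat).
Hypotheses (d_gt0 : (0 < d)%N) (v_gt0 : forall i, (0 < v i)%N)
  (v_lt_d : forall i, (v i < d)%N).

Lemma w_gt0 j : 0 < w v d j.
Proof. by rewrite divr_gt0 ?ltr0n. Qed.

Lemma w_neq1 j : w v d j != 1.
Proof. by rewrite lt_eqF // ltr_pdivrMr ?ltr0n // mul1r ltr_nat. Qed.

Lemma t_gt0 j : (0 < t v d j)%N.
Proof. by rewrite absz_gt0 denq_neq0. Qed.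

Lemma w_st j : w v d j = (s v d j)%:R / (t v d j)%:R.
Proof.
rewrite /s /t !natr_absz !ger0_norm ?numq_ge0 ?ltW ?w_gt0 ?denq_gt0 //.
by rewrite divq_num_den.
Qed.

Lemma v_t_eq_s_d j : (v j * t v d j = s v d j * d)%N.
Proof.
apply/eqP; rewrite -(eqr_nat rat) !natrM -eqr_div ?pnatr_eq0 -?lt0n ?t_gt0 //.
by rewrite -w_st.
Qed.

Lemma coprime_t_s j : coprime (t v d j) (s v d j).
Proof. by rewrite coprime_sym coprime_num_den. Qed.

Lemma t_dvd_d j : (t v d j %| d)%N.
Proof. by rewrite -(Gauss_dvdr d (coprime_t_s j)) -v_t_eq_s_d dvdn_mull. Qed.

Lemma t_dvdE j g : (0 < g)%N -> (g %| d)%N -> (t v d j %| g)%N = (d %/ g %| v j)%N.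
Proof.
move=> g_gt0 g_dvd_d; rewrite -[(_ %| v j)%N](dvdn_pmul2r g_gt0) divnK //.
rewrite -[(d %| _)%N](dvdn_pmul2r (t_gt0 j)).
rewrite (_ : v j * g * t v d j = d * (s v d j * g))%N; last first.
  by rewrite mulnAC v_t_eq_s_d; ring.
by rewrite dvdn_pmul2l // Gauss_dvdr // coprime_t_s.
Qed.

Lemma d_w_dvd_d : (d_w v d %| d)%N.
Proof. by apply/dvdn_biglcmP => j _; apply: t_dvd_d. Qed.

Lemma M_gcd k : M v d k = M v d (gcdn k (d_w v d)).
Proof. by apply/setP => j; rewrite !inE dvdn_gcd (biglcmn_sup j) ?andbT. Qed.

Lemma M_gcdE k : (0 < k)%N ->
  M v d (gcdn k (d_w v d)) = [set j | (d %/ gcdn k (d_w v d) %| v j)%N].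
Proof.
move=> k_gt0; apply/setP => j; rewrite !inE t_dvdE ?gcdn_gt0 ?k_gt0 //.
exact: dvdn_trans (dvdn_gcdr _ _) d_w_dvd_d.
Qed.

Lemma L_prod k : L v d k =
  ratr (\prod_(j < n) if (t v d j %| k)%N then (w v d j)^-1 - 1 else -1).
Proof.
rewrite /L /D_w (big_morph _ (fun x y => lefschetz_mul x y k) (lefschetz_one k)).
rewrite rmorph_prod.
apply: eq_bigr => j _; rewrite lefschetz_add !lefschetz_scale.
rewrite !lefschetz_Lambda ?t_gt0 // dvd1n mulr1 rmorphN1.
case: ifP => _; last by rewrite mulr0 add0r rmorphN1.
by rewrite w_st invf_div rmorphB rmorph1 fmorph_div fmorphV !rmorph_nat [_ / _]mulrC.
Qed.

Lemma L_formula k : L v d k = ratr ((-1) ^+ (n - #|M v d k|) * mu v d k).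
Proof.
rewrite L_prod (bigID (mem (M v d k))) /= mulrC; congr (ratr (_ * _)).
  rewrite (eq_bigr (fun _ => -1)) => [|j]; last by rewrite inE => /negbTE->.
  by rewrite prodr_const -[n in (n - _)%N]card_ord -(cardC (M v d k)) addKn.
by apply: eq_bigr => j; rewrite inE => ->.
Qed.

Lemma mu_neq0 k : mu v d k != 0.
Proof. by apply/prodf_neq0 => j _; rewrite subr_eq0 invr_eq1 w_neq1. Qed.

Lemma C2bar_count_dvd_le : C2bar v d <-> count_dvd_le predT v (fun j => d - v j)%N.
Proof.
split=> [C2 m m_gt0 | count_le J J_neq0].
  rewrite /count_dvd; set J := [set j | _ & (m %| v j)%N].
  have [->|J_neq0] := eqVneq J set0; first by rewrite cards0.
  have [K [<- K_dvd]] := C2 J J_neq0; apply/subset_leq_card/subsetP => k kK.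
  have /ZJ_nonemptyP := K_dvd k kK; rewrite (subzn (ltnW (v_lt_d k))) dvdzE /= inE.
  by apply: dvdn_trans; apply/dvdn_biggcdP => j; rewrite inE.
have [j0 j0J] := set0Pn J J_neq0; pose g := (\big[gcdn/0]_(j in J) v j)%N.
have g_dvd j : j \in J -> (g %| v j)%N by move=> jJ; apply: biggcdn_inf jJ (dvdnn _).
have g_gt0 : (0 < g)%N := dvdn_gt0 (v_gt0 j0) (g_dvd j0 j0J).
have : (#|J| <= count_dvd predT (fun j => d - v j) g)%N.
  apply: leq_trans (count_le g g_gt0); apply/subset_leq_card/subsetP => j jJ.
  by rewrite inE g_dvd.
case/card_geqP=> r [r_uniq r_size r_sub]; exists [set k in r]; split.
  by rewrite cardsE (card_uniqP r_uniq).
move=> k; rewrite inE => /r_sub; rewrite inE /= => g_dvd_k.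
by apply/ZJ_nonemptyP; rewrite (subzn (ltnW (v_lt_d k))) dvdzE.
Qed.

Lemma count_dvd_le_restrict e : (e %| d)%N ->
  count_dvd_le predT v (fun j => d - v j)%N ->
  count_dvd_le (fun j => e %| v j)%N v (fun j => d - v j)%N.
Proof.
move=> e_dvd_d count_le m m_gt0; have e_gt0 := dvdn_gt0 d_gt0 e_dvd_d.
rewrite /count_dvd /=.
have -> : [set j | (e %| v j) & (m %| v j)]%N = [set j | predT j & (lcmn e m %| v j)%N].
  by apply/setP => j; rewrite !inE dvdn_lcm.
have -> : [set j | (e %| v j) & (m %| d - v j)]%N =
          [set j | predT j & (lcmn e m %| d - v j)%N].
  by apply/setP => j; rewrite !inE dvdn_lcm (dvdn_subr (ltnW (v_lt_d j)) e_dvd_d).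
by apply: count_le; rewrite lcmn_gt0 e_gt0.
Qed.

Lemma d_sub_v_gt0 j : (0 < d - v j)%N.
Proof. by rewrite subn_gt0. Qed.

Lemma mu_gcdE k : (0 < k)%N ->
  let P j := (d %/ gcdn k (d_w v d) %| v j)%N in
  mu v d k = (\prod_(j | P j) (d - v j))%:R / (\prod_(j | P j) v j)%:R.
Proof.
move=> k_gt0 P; rewrite /mu M_gcd M_gcdE // !natr_prod -prodf_div.
apply: eq_big => [j|j _]; first by rewrite inE.
rewrite /w invf_div (natrB _ (ltnW (v_lt_d j))) mulrBl divff //.
by rewrite pnatr_eq0 -lt0n v_gt0.
Qed.

Lemma mu_nat k : (0 < k)%N -> C2bar v d -> exists m : nat, mu v d k = m%:R.
Proof.
move=> k_gt0 /C2bar_count_dvd_le count_le; rewrite mu_gcdE //.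
set e := (d %/ _)%N; have e_dvd_d : (e %| d)%N.
  by apply/dvdn_div/(dvdn_trans (dvdn_gcdr _ _) d_w_dvd_d).
have := count_dvd_le_restrict e_dvd_d count_le.
rewrite -(prod_Xn_sub1_dvdP _ 0 v_gt0 d_sub_v_gt0) => -[p].
rewrite expr0 mul1r => /prod_dvdn_of_Xn_sub1 prod_dvd.
by rewrite -natq_div //; eexists.
Qed.

Lemma rho_intpolyP :
  (exists p : {poly int}, rho v d = FracField.tofrac (map_poly intr p : {poly rat})) <->
  count_dvd_le predT v (fun j => d - v j)%N.
Proof.
pose N : {poly int} := 'X^(\sum_j v j) * \prod_j ('X^(d - v j) - 1).
pose D : {poly int} := \prod_j ('X^(v j) - 1).
have map_X_sub1 a : map_poly intr ('X^a - 1 : {poly int}) = 'X^a - 1 :> {poly rat}.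
  by rewrite rmorphB rmorphXn /= map_polyX rmorph1.
have D_neq0 : D != 0.
  by apply/prodf_neq0 => j _; rewrite -size_poly_eq0 -polyC1 size_XnsubC.
have map_prod_X_sub1 (f : 'I_n -> nat) :
    map_poly intr (\prod_j ('X^(f j) - 1)) = \prod_j ('X^(f j) - 1) :> {poly rat}.
  by rewrite rmorph_prod; apply: eq_bigr => j _; rewrite /= map_X_sub1.
have -> : rho v d = FracField.tofrac (map_poly intr N) / FracField.tofrac (map_poly intr D).
  by rewrite rmorphM /= rmorphXn /= map_polyX !map_prod_X_sub1.
rewrite (tofrac_div_intpolyP _ D_neq0).
exact: (prod_Xn_sub1_dvdP predT _ v_gt0 d_sub_v_gt0).
Qed.

End WeightData.

Theorem lemma3p7 (n : nat) (v : 'I_n -> nat) (d : nat)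
  (hd : (0 < d)%N) (hv0 : forall i, (0 < v i)%N) (hvd : forall i, (v i < d)%N) :
  (* (a) *)
  (forall k : nat, (0 < k)%N ->
     M v d k = M v d (gcdn k (d_w v d)) /\
     M v d (gcdn k (d_w v d)) = [set j : 'I_n | (d %/ gcdn k (d_w v d) %| v j)%N] /\
     mu v d k = mu v d (gcdn k (d_w v d))) /\
  (* (b) *)
  (forall k : nat, (0 < k)%N ->
     L v d k = L v d (gcdn k (d_w v d)) /\
     L v d k = ratr ((-1) ^+ (n - #|M v d k|) * mu v d k) /\
     (-1) ^+ (n - #|M v d k|) * mu v d k != 0) /\
  (* (c) *)
  (C2bar v d -> forall k : nat, (0 < k)%N -> exists m : nat, mu v d k = m%:R) /\
  (C2bar v d <-> exists p : {poly int}, rho v d = FracField.tofrac (map_poly intr p : {poly rat})).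
Proof.
split; [|split; [|split]].
- move=> k k_gt0; split; first exact: M_gcd.
  by split; [exact: M_gcdE | rewrite /mu -M_gcd].
- move=> k k_gt0; split; first by rewrite !L_formula // /mu -M_gcd.
  by split; [exact: L_formula | rewrite mulf_neq0 ?signr_eq0 ?mu_neq0].
- by move=> C2 k k_gt0; apply: mu_nat.
- by rewrite (C2bar_count_dvd_le hv0 hvd) (rho_intpolyP hv0 hvd).
Qed.
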